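(* Let a total cost $N_{tot}\in\mathbb{N}$ be fixed. Under the assumption stated in the context (independent Monte-Carlo estimators $\widehat W_u=\frac1{N_u}\sum_{n=1}^{N_u}\widehat W_u^{(n)}$ of cost $\kappa N_u$), if the Shapley effects are estimated with the subset $W$-aggregation procedure, the solution of the relaxed program $$\min_{(N_u)_{\emptyset\subsetneq u\subsetneq[1:p]}\in(0,+\infty)^{2^p-2}}\sum_{i=1}^p\mathrm{Var}(\widehat\eta_i)\quad\text{subject to}\quad\kappa\sum_{\emptyset\subsetneq u\subsetneq[1:p]}N_u=N_{tot}$$ is $(N_u^* )_{\emptyset\subsetneq u\subsetneq[1:p]}$ with, for all $\emptyset\subsetneq u\subsetneq[1:p]$, $$N_u^*=\frac{N_{tot}}{\kappa}\,\frac{\sqrt{(p-|u|)!\,|u|!\,(p-|u|-1)!\,(|u|-1)!\,\mathrm{Var}(\widehat W_u^{(1)})}}{\sum_{\emptyset\subsetneq v\subsetneq[1:p]}\sqrt{(p-|v|)!\,|v|!\,(p-|v|-1)!\,(|v|-1)!\,\mathrm{Var}(\widehat W_v^{(1)})}}.$$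
   Context: Setting: $\mathbf{X}=(X_1,\dots,X_p)$, $Y=f(\mathbf{X})$ with $f\in L^2(\mathbb{P}_\mathbf{X})$. For $u\subset[1:p]$, $W_u$ denotes either $V_u=\mathrm{Var}(\mathrm{E}(Y|\mathbf{X}_u))$ for all $u$ or $E_u=\mathrm{E}(\mathrm{Var}(Y|\mathbf{X}_{-u}))$ for all $u$, with $-u=[1:p]\setminus u$; $W_\emptyset=0$, $W_{[1:p]}=\mathrm{Var}(Y)$ are taken as known. The Shapley effects are $\eta_i=\frac{1}{p\mathrm{Var}(Y)}\sum_{u\subset -i}\binom{p-1}{|u|}^{-1}(W_{u\cup\{i\}}-W_u)$. Assumption: for all $\emptyset\subsetneq u\subsetneq[1:p]$, $\widehat W_u$ is computed with cost $\kappa N_u$ (number of evaluations of $f$) as $\widehat W_u=\frac1{N_u}\sum_{n=1}^{N_u}\widehat W_u^{(n)}$ with $(\widehat W_u^{(n)})_n$ i.i.d., and the $(\widehat W_u)_u$ are independent; $\kappa\in\mathbb{N}^*$. Subset $W$-aggregation procedure: compute $\widehat W_u$ once for every $u$ (with $\widehat W_\emptyset=0$, $\widehat W_{[1:p]}=\mathrm{Var}(Y)$) and set $\widehat\eta_i=\frac{1}{p\mathrm{Var}(Y)}\sum_{u\subset -i}\binom{p-1}{|u|}^{-1}(\widehat W_{u\cup\{i\}}-\widehat W_u)$ for all $i$. *)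

From mathcomp Require Import all_boot all_order all_algebra.
Set Implicit Arguments. Unset Strict Implicit. Unset Printing Implicit Defensive.
Import Order.TTheory GRing.Theory Num.Theory.
Local Open Scope ring_scope.

Section Shapley.
Variables (R : rcfType) (p : nat).

Definition nontriv (u : {set 'I_p}) : bool := (u != set0) && (u != setT).

(* Coefficient of W_v in the subset W-aggregation estimator:
   eta_i = sum_v aggr_coef VarY i v * W_v, i.e.
   1/(p VarY) sum_{u subset -i} C(p-1,|u|)^{-1} ([v = u U {i}] - [v = u]). *)
Definition aggr_coef (VarY : R) (i : 'I_p) (v : {set 'I_p}) : R :=
  (p%:R * VarY)^-1 *
  \sum_(u : {set 'I_p} | i \notin u)
     ('C(p.-1, #|u|)%:R)^-1 * ((v == i |: u)%:R - (v == u)%:R).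

(* Var(hat W_v) for the Monte-Carlo estimator with N_v samples:
   Var(hat W_v^(1)) / N_v (relaxed to real N_v); 0 for v = emptyset, [1:p]
   whose values are known exactly. *)
Definition varW (sigma2 N : {set 'I_p} -> R) (v : {set 'I_p}) : R :=
  if nontriv v then sigma2 v / N v else 0.

(* Var(hat eta_i), using independence of the (hat W_v)_v. *)
Definition var_eta (VarY : R) (sigma2 N : {set 'I_p} -> R) (i : 'I_p) : R :=
  \sum_(v : {set 'I_p}) (aggr_coef VarY i v) ^+ 2 * varW sigma2 N v.

Definition total_var (VarY : R) (sigma2 N : {set 'I_p} -> R) : R :=
  \sum_(i < p) var_eta VarY sigma2 N i.

Definition feasible (kappa Ntot : nat) (N : {set 'I_p} -> R) : Prop :=
  (forall u, nontriv u -> 0 < N u) /\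
  kappa%:R * (\sum_(u : {set 'I_p} | nontriv u) N u) = Ntot%:R.

Definition shap_weight (u : {set 'I_p}) : R :=
  ((p - #|u|)`! * #|u|`! * (p - #|u| - 1)`! * (#|u| - 1)`!)%:R.

Definition Nstar (kappa Ntot : nat) (sigma2 : {set 'I_p} -> R) (u : {set 'I_p}) : R :=
  Ntot%:R / kappa%:R *
  (Num.sqrt (shap_weight u * sigma2 u) /
   \sum_(v : {set 'I_p} | nontriv v) Num.sqrt (shap_weight v * sigma2 v)).

End Shapley.

(* By independence, Var(eta_i) = sum_v c_{i,v}^2 Var(W_v) where the aggregation
   coefficient c_{i,v} is (p VarY)^-1 C(p-1, |v|-1)^-1 if i is in v and
   -(p VarY)^-1 C(p-1, |v|)^-1 otherwise.  Summing over i, the identity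
   k C(p-1, k-1)^-2 + (p-k) C(p-1, k)^-2 = p w_v / (p-1)!^2, with w_v the
   factorial weight of the statement, turns the objective into a positive
   multiple of sum_v a_v / N_v with a_v = w_v Var(W_v^(1)).  Under the budget
   sum_v N_v = T, completing the square gives
     sum_v a_v / N_v = S^2 / T + sum_v (sqrt a_v - S N_v / T)^2 / N_v,
   S = sum_v sqrt a_v, so the minimum S^2 / T is attained exactly at
   N_v = T sqrt a_v / S. *)

From mathcomp Require Import all_boot all_order all_algebra.
From mathcomp Require Import ring zify.
Set Implicit Arguments. Unset Strict Implicit. Unset Printing Implicit Defensive.
Import Order.TTheory GRing.Theory Num.Theory.
Local Open Scope ring_scope.

Lemma invr_bin (R : numFieldType) (n k : nat) : (k <= n)%N ->
  ('C(n, k)%:R : R)^-1 = (k`! * (n - k)`!)%:R / n`!%:R.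
Proof.
move=> le_kn; rewrite -(bin_fact le_kn) [X in _ / X]natrM invfM mulrCA.
by rewrite divff ?mulr1 // pnatr_eq0 muln_eq0 !negb_or -!lt0n !fact_gt0.
Qed.

Section RelaxedAllocation.
Variables (R : rcfType) (I : finType) (P : pred I) (a : I -> R) (T : R).

Definition admissible (N : I -> R) : Prop :=
  (forall v, P v -> 0 < N v) /\ \sum_(v | P v) N v = T.

Definition sqrt_alloc (v : I) : R :=
  T * (Num.sqrt (a v) / \sum_(w | P w) Num.sqrt (a w)).

Local Notation S := (\sum_(w | P w) Num.sqrt (a w)).

Hypotheses (T_gt0 : 0 < T) (a_gt0 : forall v, P v -> 0 < a v).
Variable v0 : I.
Hypothesis P_v0 : P v0.

Lemma sum_sqrt_gt0 : 0 < S.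
Proof.
have sqrt_ge0 w : P w -> 0 <= Num.sqrt (a w) by rewrite sqrtr_ge0.
rewrite lt_def sumr_ge0 // psumr_neq0 // andbT.
by apply/hasP; exists v0; rewrite ?mem_index_enum // P_v0 sqrtr_gt0 a_gt0.
Qed.

Lemma sum_div_decomp (N : I -> R) : admissible N ->
  \sum_(v | P v) a v / N v =
  S ^+ 2 / T + \sum_(v | P v) (Num.sqrt (a v) - S / T * N v) ^+ 2 / N v.
Proof.
case=> N_gt0 sumN.
have square_term v : P v -> (Num.sqrt (a v) - S / T * N v) ^+ 2 / N v =
    a v / N v - 2 * (S / T) * Num.sqrt (a v) + (S / T) ^+ 2 * N v.
  move=> Pv; rewrite -{2}(sqr_sqrtr (ltW (a_gt0 Pv))); field.
  by rewrite !gt_eqF ?N_gt0.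
rewrite (eq_bigr _ square_term) big_split sumrB /= -!mulr_sumr sumN.
by field; rewrite gt_eqF.
Qed.

Lemma sqrt_alloc_admissible : admissible sqrt_alloc.
Proof.
split=> [v Pv|]; first by rewrite mulr_gt0 ?divr_gt0 ?sqrtr_gt0 ?a_gt0 ?sum_sqrt_gt0.
by rewrite -mulr_sumr -mulr_suml divff ?mulr1 // gt_eqF ?sum_sqrt_gt0.
Qed.

Lemma sum_div_sqrt_alloc : \sum_(v | P v) a v / sqrt_alloc v = S ^+ 2 / T.
Proof.
rewrite (sum_div_decomp sqrt_alloc_admissible) [X in _ + X]big1 ?addr0 // => v Pv.
suff -> : S / T * sqrt_alloc v = Num.sqrt (a v) by rewrite subrr expr0n mul0r.
by rewrite /sqrt_alloc; field; rewrite !gt_eqF ?sum_sqrt_gt0.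
Qed.

Lemma sqrt_alloc_min (N : I -> R) : admissible N ->
  \sum_(v | P v) a v / sqrt_alloc v <= \sum_(v | P v) a v / N v.
Proof.
move=> admN; rewrite sum_div_sqrt_alloc (sum_div_decomp admN) lerDl.
by apply: sumr_ge0 => v Pv; rewrite divr_ge0 ?sqr_ge0 ?ltW ?admN.1.
Qed.

Lemma sqrt_alloc_unique (N : I -> R) : admissible N ->
  \sum_(v | P v) a v / N v = \sum_(v | P v) a v / sqrt_alloc v ->
  forall v, P v -> N v = sqrt_alloc v.
Proof.
move=> admN; rewrite sum_div_sqrt_alloc (sum_div_decomp admN) => /eqP.
rewrite -subr_eq0 addrAC subrr add0r => /eqP defect0 v Pv.
have N_gt0 := admN.1.
have /eqP := psumr_eq0P (fun w Pw => divr_ge0 (sqr_ge0 _) (ltW (N_gt0 w Pw))) defect0 Pv.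
rewrite mulf_eq0 invr_eq0 (gt_eqF (N_gt0 v Pv)) orbF sqrf_eq0 subr_eq0 => /eqP sqrt_av.
by rewrite /sqrt_alloc sqrt_av; field; rewrite !gt_eqF ?sum_sqrt_gt0 ?N_gt0.
Qed.

End RelaxedAllocation.

Section AggregationCoefficients.
Variables (R : rcfType) (p : nat) (VarY : R).

Lemma aggr_coef_mem (i : 'I_p) (v : {set 'I_p}) : i \in v ->
  aggr_coef VarY i v = (p%:R * VarY)^-1 * ('C(p.-1, #|v|.-1)%:R)^-1.
Proof.
move=> iv; rewrite /aggr_coef (bigD1 (v :\ i)) ?setD11 //= setD1K // eqxx.
rewrite big1 => [|u /andP [iu neq_u]]; last first.
  have /negbTE -> : v != i |: u by apply: contraNneq neq_u => ->; rewrite setU1K.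
  have /negbTE -> : v != u by apply: contraNneq iu => <-.
  by rewrite subrr mulr0.
have /negbTE -> : v != v :\ i by apply: contraTneq iv => ->; rewrite setD11.
by rewrite subr0 mulr1 addr0 (cardsD1 i v) iv.
Qed.

Lemma aggr_coef_notin (i : 'I_p) (v : {set 'I_p}) : i \notin v ->
  aggr_coef VarY i v = - ((p%:R * VarY)^-1 * ('C(p.-1, #|v|)%:R)^-1).
Proof.
move=> iv; rewrite /aggr_coef -mulrN (bigD1 v) //= eqxx.
rewrite big1 => [|u /andP [iu neq_u]]; last first.
  have /negbTE -> : v != i |: u by apply: contraNneq iv => ->; rewrite setU11.
  by rewrite eq_sym (negbTE neq_u) subrr mulr0.
have /negbTE -> : v != i |: v by apply: contraNneq iv => {1}->; rewrite setU11.
by rewrite sub0r mulrN1 addr0.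
Qed.

Lemma sum_aggr_coef_sqr (v : {set 'I_p}) :
  \sum_(i < p) aggr_coef VarY i v ^+ 2 = (p%:R * VarY)^-2 *
    (#|v|%:R * ('C(p.-1, #|v|.-1)%:R)^-2 + (p - #|v|)%:R * ('C(p.-1, #|v|)%:R)^-2).
Proof.
rewrite (bigID (mem v)) /= mulrDr; congr (_ + _).
  under eq_bigr => i iv do rewrite aggr_coef_mem //.
  by rewrite sumr_const exprMn !exprVn; ring.
have card_vC : #|~: v| = (p - #|v|)%N by rewrite cardsCs setCK card_ord.
rewrite (eq_bigl (fun i => i \in ~: v)) => [|i]; last by rewrite !inE.
set c := (p%:R * VarY)^-1 * ('C(p.-1, #|v|)%:R)^-1.
rewrite (eq_bigr (fun=> c ^+ 2)) => [|i]; last first.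
  by rewrite inE => iv; rewrite aggr_coef_notin ?sqrrN.
by rewrite sumr_const card_vC exprMn !exprVn; ring.
Qed.

End AggregationCoefficients.

Section TotalVariance.
Variables (R : rcfType) (p : nat).

Lemma nontriv_card (v : {set 'I_p}) : nontriv v -> (0 < #|v| < p)%N.
Proof.
case/andP=> v_neq0 v_neqT; rewrite card_gt0 v_neq0 ltnNge /=.
by apply: contra v_neqT => le_pv; rewrite eqEcard subsetT cardsT card_ord.
Qed.

Lemma nontriv_exists : (2 <= p)%N -> exists v : {set 'I_p}, nontriv v.
Proof.
move=> le2p; exists [set Ordinal (ltnW le2p)].
rewrite /nontriv -card_gt0 (eqEcard _ setT) cards1 cardsT card_ord.
by rewrite (leqNgt p 1) le2p andbF.
Qed.

Definition var_scale (VarY : R) : R :=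
  (p%:R * VarY)^-2 * (p%:R / (p.-1)`!%:R ^+ 2).

Lemma sum_aggr_coef_sqr_nontriv (VarY : R) (v : {set 'I_p}) : nontriv v ->
  \sum_(i < p) aggr_coef VarY i v ^+ 2 = var_scale VarY * shap_weight R v.
Proof.
move=> /nontriv_card/andP[v_gt0 v_ltp].
rewrite sum_aggr_coef_sqr /var_scale -mulrA; congr (_ * _).
have [k card_v] : exists k, #|v| = k.+1 by exists #|v|.-1; lia.
have [m def_p] : exists m, p = (k.+1 + m.+1)%N by exists (p - #|v|).-1; lia.
rewrite /shap_weight card_v def_p addnS /= -!exprVn.
rewrite !invr_bin ?(ltnW (leq_addr _ _)) ?leq_addr //.
have -> : (k.+1 + m - k = m.+1)%N by lia.
have -> : (k.+1 + m - k.+1 = m)%N by lia.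
have -> : ((k.+1 + m).+1 - k.+1 = m.+1)%N by lia.
set F := (k.+1 + m)`!.
have F_neq0 : (F%:R : R) != 0 by rewrite pnatr_eq0 -lt0n fact_gt0.
clearbody F.
by rewrite !subn1 !succnK !factS !natrM; field.
Qed.

Lemma shap_weight_gt0 (v : {set 'I_p}) : 0 < shap_weight R v.
Proof. by rewrite ltr0n !muln_gt0 !fact_gt0. Qed.

Lemma var_scale_gt0 (VarY : R) : (0 < p)%N -> 0 < VarY -> 0 < var_scale VarY.
Proof.
move=> p_gt0 VarY_gt0.
by rewrite mulr_gt0 ?divr_gt0 ?invr_gt0 ?exprn_gt0 ?mulr_gt0 ?ltr0n ?fact_gt0.
Qed.

Lemma total_varE (VarY : R) (sigma2 N : {set 'I_p} -> R) :
  total_var VarY sigma2 N =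
  var_scale VarY * \sum_(v | nontriv v) shap_weight R v * sigma2 v / N v.
Proof.
rewrite /total_var /var_eta exchange_big mulr_sumr [RHS]big_mkcond.
apply: eq_bigr => v _; rewrite -mulr_suml /varW.
by case: ifP => [nv|_]; rewrite ?mulr0 // sum_aggr_coef_sqr_nontriv // !mulrA.
Qed.

Lemma feasibleE (kappa Ntot : nat) (N : {set 'I_p} -> R) : (0 < kappa)%N ->
  feasible kappa Ntot N <-> admissible (@nontriv p) (Ntot%:R / kappa%:R) N.
Proof.
move=> kappa_gt0; have kappa_neq0 : (kappa%:R : R) != 0 by rewrite pnatr_eq0 -lt0n.
split=> -[N_gt0 sumN]; split=> //; first by rewrite -sumN mulrC mulKf.
by rewrite sumN mulrCA divff ?mulr1.
Qed.

End TotalVariance.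

Theorem proposition3 (R : rcfType) (p kappa Ntot : nat) (VarY : R)
    (sigma2 : {set 'I_p} -> R) :
  (2 <= p)%N -> (0 < kappa)%N -> (0 < Ntot)%N -> 0 < VarY ->
  (forall u : {set 'I_p}, nontriv u -> 0 < sigma2 u) ->
  feasible kappa Ntot (Nstar kappa Ntot sigma2) /\
  (forall N : {set 'I_p} -> R, feasible kappa Ntot N ->
     total_var VarY sigma2 (Nstar kappa Ntot sigma2) <= total_var VarY sigma2 N /\
     (total_var VarY sigma2 N = total_var VarY sigma2 (Nstar kappa Ntot sigma2) ->
        forall u, nontriv u -> N u = Nstar kappa Ntot sigma2 u)).
Proof.
move=> le2p kappa_gt0 Ntot_gt0 VarY_gt0 sigma2_gt0.
have a_gt0 v : nontriv v -> 0 < shap_weight R v * sigma2 v.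
  by move=> nv; rewrite mulr_gt0 ?sigma2_gt0 ?shap_weight_gt0.
have T_gt0 : 0 < (Ntot%:R / kappa%:R : R) by rewrite divr_gt0 ?ltr0n.
have [v0 nv0] := nontriv_exists le2p.
have scale_gt0 := var_scale_gt0 (ltnW le2p) VarY_gt0.
have -> : Nstar kappa Ntot sigma2 = sqrt_alloc (@nontriv p)
    (fun v => shap_weight R v * sigma2 v) (Ntot%:R / kappa%:R) by [].
split; first exact/feasibleE/(sqrt_alloc_admissible T_gt0 a_gt0 nv0).
move=> N /(feasibleE _ _ kappa_gt0) admN; rewrite !total_varE ler_pM2l //.
split; first by have := sqrt_alloc_min T_gt0 a_gt0 nv0 admN.
by move=> /(mulfI (lt0r_neq0 scale_gt0)) /(sqrt_alloc_unique T_gt0 a_gt0 nv0 admN).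
Qed.
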